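(* Let $d$ be a positive integer, let $\kappa,\mu,\nu$ be $d$-partitions with $\mu\succ\kappa\prec\nu$, and let $m$ be a nonnegative integer such that $\kappa_d=0$ or $m=0$. Then there exists a unique $d$-partition $\rho$ such that the cell with entry $m$ and bottom-left, top-left, bottom-right, top-right corners $\kappa,\mu,\nu,\rho$ satisfies the $d$-RSK local rule.
   Context: Partitions: finite weakly decreasing sequences of positive integers, $\lambda_i=0$ for $i>\ell(\lambda)$; $d$-partitions have $\ell\le d$; $\alpha\prec\beta$ (also $\beta\succ\alpha$) means $\beta_1\ge\alpha_1\ge\beta_2\ge\alpha_2\ge\cdots$. The $d$-RSK local rule for a cell with entry $m$ and corners $\kappa$ (bottom-left), $\mu$ (top-left), $\nu$ (bottom-right), $\rho$ (top-right) requires: all four are $d$-partitions, $\mu\succ\kappa\prec\nu$, $\mu\prec\rho\succ\nu$, $m=0$ or $\kappa_d=0$, $\rho_1+\kappa_d=m+\min(\mu_d,\nu_d)+\max(\mu_1,\nu_1)$, and $\rho_i+\kappa_{i-1}=\min(\mu_{i-1},\nu_{i-1})+\max(\mu_i,\nu_i)$ for $2\le i\le d$. *)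

From mathcomp Require Import all_boot.

Set Implicit Arguments. Unset Strict Implicit. Unset Printing Implicit Defensive.

Definition is_partition (s : seq nat) : bool :=
  sorted geq s && all (fun x => 0 < x) s.

Definition dpartition (d : nat) (s : seq nat) : bool :=
  is_partition s && (size s <= d).

(* 1-indexed part lambda_i; equals 0 for i > length (and for i = 0 by convention,
   index 0 is never used in the statements below). *)
Definition part (s : seq nat) (i : nat) : nat := nth 0 s i.-1.

(* interlace a b : a ≺ b, i.e. b_1 >= a_1 >= b_2 >= a_2 >= ... *)
Definition interlace (a b : seq nat) : Prop :=
  forall i, 1 <= i -> part b i >= part a i /\ part a i >= part b i.+1.

Definition rsk_local_rule (d m : nat) (kappa mu nu rho : seq nat) : Prop :=
  [/\ dpartition d kappa, dpartition d mu, dpartition d nu & dpartition d rho] /\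
  [/\ interlace kappa mu, interlace kappa nu, interlace mu rho & interlace nu rho] /\
  ((m == 0) || (part kappa d == 0)) /\
  part rho 1 + part kappa d
    = m + minn (part mu d) (part nu d) + maxn (part mu 1) (part nu 1) /\
  (forall i, 2 <= i <= d ->
     part rho i + part kappa i.-1
       = minn (part mu i.-1) (part nu i.-1) + maxn (part mu i) (part nu i)).

From mathcomp Require Import all_boot.
From mathcomp Require Import zify.

Set Implicit Arguments.
Unset Strict Implicit.
Unset Printing Implicit Defensive.

(* Each equation of the local rule is linear in one part of [rho], so it can
   be solved for [rho_i]; this forces uniqueness.  For existence, the
   interlacing [mu >- kappa -< nu] gives
   [max (mu_i, nu_i) <= kappa_{i-1} <= min (mu_{i-1}, nu_{i-1})], which makes
   each solved value at least [max (mu_i, nu_i)] and at most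
   [min (mu_{i-1}, nu_{i-1})]: these bounds say that the solutions are
   nonincreasing and that [rho] interlaces [mu] and [nu]. *)

Lemma geq_trans : transitive geq.
Proof. exact: rev_trans leq_trans. Qed.

Lemma nth_filter_gt0 (s : seq nat) j :
  sorted geq s -> nth 0 [seq x <- s | 0 < x] j = nth 0 s j.
Proof.
elim: s j => [|x s IH] j //= s_sorted.
have {}IH := IH _ (path_sorted s_sorted).
have [x0 | x_gt0] := posnP x; last by case: j.
have s0 y : y \in x :: s -> y = 0.
  rewrite inE => /predU1P [-> // | y_s].
  move/allP: (order_path_min geq_trans s_sorted) => /(_ y y_s) /=; lia.
have nth0 k : nth 0 (x :: s) k = 0.
  have [k_lt | k_ge] := ltnP k (size (x :: s)); last by rewrite nth_default.
  exact/s0/mem_nth.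
by rewrite IH -[nth 0 s j]/(nth 0 (x :: s) j.+1) !nth0.
Qed.

Lemma nth_partition_gt0 s j : is_partition s -> (0 < nth 0 s j) = (j < size s).
Proof.
case/andP=> _ s_gt0; have [j_lt | j_ge] := ltnP j (size s).
- by move/allP: s_gt0 => /(_ _ (mem_nth 0 j_lt)).
- by rewrite nth_default.
Qed.

Lemma part_dpartition_gt d s i : dpartition d s -> d < i -> part s i = 0.
Proof. by case/andP=> _ s_le d_lt; rewrite /part nth_default //; lia. Qed.

Lemma dpartition_part_inj d s t : dpartition d s -> dpartition d t ->
  (forall i, 1 <= i <= d -> part s i = part t i) -> s = t.
Proof.
move=> /andP [Ps s_le] /andP [Pt t_le] eq_st.
have nth_st j : nth 0 s j = nth 0 t j.
  have [j_lt | j_ge] := ltnP j d; first by apply: (eq_st j.+1); lia.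
  by rewrite !nth_default //; lia.
have size_le u v : is_partition u -> is_partition v ->
    (forall j, nth 0 u j = nth 0 v j) -> size u <= size v.
  move=> Pu Pv nth_uv.
  by rewrite leqNgt -(nth_partition_gt0 _ Pu) nth_uv (nth_partition_gt0 _ Pv) ltnn.
have size_st : size s = size t.
  by apply/anti_leq; rewrite !size_le.
exact: (eq_from_nth (x0 := 0) size_st).
Qed.

Section PartitionOfParts.

Variables (d : nat) (f : nat -> nat).
Hypothesis f_nonincr : forall i, 0 < i < d -> f i.+1 <= f i.

(* Zero parts are dropped, so for nonincreasing [f] this is the d-partition
   with parts [f 1, ..., f d]. *)
Definition dpartition_of : seq nat := [seq x <- mkseq (fun j => f j.+1) d | 0 < x].

Lemma sorted_parts : sorted geq (mkseq (fun j => f j.+1) d).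
Proof.
apply/(sortedP 0) => j; rewrite size_mkseq => j_lt.
by rewrite !nth_mkseq /= 1?f_nonincr //; lia.
Qed.

Lemma dpartition_of_dpartition : dpartition d dpartition_of.
Proof.
rewrite /dpartition /is_partition -andbA; apply/and3P; split.
- exact: (sorted_filter geq_trans _ sorted_parts).
- exact: filter_all.
- by rewrite size_filter (leq_trans (count_size _ _)) ?size_mkseq.
Qed.

Lemma part_dpartition_of i : 0 < i -> part dpartition_of i = if i <= d then f i else 0.
Proof.
move=> i_gt0; rewrite /part nth_filter_gt0 ?sorted_parts //.
have [i_le | i_gt] := leqP i d; first by rewrite nth_mkseq ?prednK //; lia.
by rewrite nth_default ?size_mkseq //; lia.
Qed.

Lemma interlace_dpartition_of a : dpartition d a ->
  (forall i, 0 < i <= d -> part a i <= f i) ->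
  (forall i, 0 < i < d -> f i.+1 <= part a i) ->
  interlace a dpartition_of.
Proof.
move=> Da a_le_f f_le_a i i_gt0; rewrite !part_dpartition_of //.
split.
- case: (leqP i d) => [i_le | i_gt]; last by rewrite (part_dpartition_gt Da i_gt).
  by apply: a_le_f; rewrite i_gt0.
- by case: ifP => [i_lt | //]; apply: f_le_a; rewrite i_gt0.
Qed.

End PartitionOfParts.

(* The value of [rho_i] forced by the local rule. *)
Definition rsk_part (d m : nat) (kappa mu nu : seq nat) (i : nat) : nat :=
  if i == 1 then
    m + minn (part mu d) (part nu d) + maxn (part mu 1) (part nu 1) - part kappa d
  else minn (part mu i.-1) (part nu i.-1) + maxn (part mu i) (part nu i) - part kappa i.-1.

Lemma rsk_local_rule_part d m kappa mu nu rho i :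
  rsk_local_rule d m kappa mu nu rho -> 0 < i <= d ->
  part rho i = rsk_part d m kappa mu nu i.
Proof.
move=> [_ [_ [_ [rule1 rule_i]]]] /andP [i_gt0 i_le]; rewrite /rsk_part.
case: eqP => [-> | /eqP i_neq1]; first lia.
have := rule_i i; rewrite i_le andbT; lia.
Qed.

Section Existence.

Variables (d m : nat) (kappa mu nu : seq nat).
Hypotheses (d_gt0 : 0 < d) (Ikm : interlace kappa mu) (Ikn : interlace kappa nu).

Local Notation rho_part := (rsk_part d m kappa mu nu).

Lemma kappa_le_minn i : 0 < i -> part kappa i <= minn (part mu i) (part nu i).
Proof. by move=> i_gt0; have := Ikm i_gt0; have := Ikn i_gt0; lia. Qed.

Lemma maxn_le_kappa i : 0 < i -> maxn (part mu i.+1) (part nu i.+1) <= part kappa i.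
Proof. by move=> i_gt0; have := Ikm i_gt0; have := Ikn i_gt0; lia. Qed.

Lemma maxn_le_rsk_part i : 0 < i -> maxn (part mu i) (part nu i) <= rho_part i.
Proof.
move=> i_gt0; rewrite /rsk_part; case: eqP => [-> | /eqP i_neq1].
- by have := kappa_le_minn d_gt0; lia.
- have i1_gt0 : 0 < i.-1 by lia.
  by have := kappa_le_minn i1_gt0; lia.
Qed.

Lemma rsk_part_le_minn i : 0 < i -> rho_part i.+1 <= minn (part mu i) (part nu i).
Proof.
move=> i_gt0; rewrite /rsk_part eqSS (negbTE (lt0n_neq0 i_gt0)) /=.
by have := maxn_le_kappa i_gt0; lia.
Qed.

Lemma rsk_part_nonincr i : 0 < i < d -> rho_part i.+1 <= rho_part i.
Proof.
move=> /andP [i_gt0 _]; have := maxn_le_rsk_part i_gt0.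
by have := rsk_part_le_minn i_gt0; lia.
Qed.

Lemma interlace_rsk_part a :
  dpartition d a -> (forall i, minn (part mu i) (part nu i) <= part a i) ->
  (forall i, part a i <= maxn (part mu i) (part nu i)) ->
  interlace a (dpartition_of d rho_part).
Proof.
move=> Da min_le max_ge.
apply: (interlace_dpartition_of rsk_part_nonincr Da) => i /andP [i_gt0 _].
- exact: leq_trans (max_ge i) (maxn_le_rsk_part i_gt0).
- exact: leq_trans (rsk_part_le_minn i_gt0) (min_le i).
Qed.

Lemma rsk_local_rule_dpartition_of :
  dpartition d kappa -> dpartition d mu -> dpartition d nu ->
  (m == 0) || (part kappa d == 0) ->
  rsk_local_rule d m kappa mu nu (dpartition_of d rho_part).
Proof.
move=> Dk Dm Dn m_kappa.
have Drho := dpartition_of_dpartition rsk_part_nonincr.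
have part_rho := part_dpartition_of rsk_part_nonincr.
split; first by split.
split.
  split=> //; apply: interlace_rsk_part => // i.
  - exact: geq_minl.
  - exact: leq_maxl.
  - exact: geq_minr.
  - exact: leq_maxr.
split=> //; split.
  by rewrite part_rho // d_gt0 /rsk_part /=; have := kappa_le_minn d_gt0; lia.
move=> i /andP [i_ge2 i_le]; rewrite part_rho ?i_le 1?ltnW // /rsk_part.
have -> : (i == 1) = false by apply/eqP; lia.
have i1_gt0 : 0 < i.-1 by lia.
by have := kappa_le_minn i1_gt0; lia.
Qed.

End Existence.

Theorem lemma6p1 (d : nat) (kappa mu nu : seq nat) (m : nat) :
  0 < d ->
  dpartition d kappa -> dpartition d mu -> dpartition d nu ->
  interlace kappa mu -> interlace kappa nu ->
  (part kappa d == 0) || (m == 0) ->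
  exists! rho : seq nat, rsk_local_rule d m kappa mu nu rho.
Proof.
move=> d_gt0 Dk Dm Dn Ikm Ikn m_kappa.
have rule : rsk_local_rule d m kappa mu nu (dpartition_of d (rsk_part d m kappa mu nu)).
  by apply: rsk_local_rule_dpartition_of; rewrite // orbC.
exists (dpartition_of d (rsk_part d m kappa mu nu)); split=> // rho rho_rule.
have [[_ _ _ Drho0] _] := rule; have [[_ _ _ Drho] _] := rho_rule.
apply: (dpartition_part_inj Drho0 Drho) => i i_range.
by rewrite (rsk_local_rule_part rule i_range) (rsk_local_rule_part rho_rule i_range).
Qed.
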